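(* If $x\in CBV[0,1]$ and $A\in\widehat{\Omega}[0,1]$, then the Riemann–Stieltjes integral $\int_0^1A(s)\,dx(s)$ exists.
   Context: $CBV[0,1]$ denotes the continuous real functions of bounded Jordan variation on $[0,1]$. For $\varepsilon>0$ and $a<b$, a bounded $A\colon[a,b]\to\mathbb R$ belongs to $\Omega_\varepsilon[a,b]$ if there exists $\delta>0$ such that $\operatorname{osc}_{[t,s]}A\le\varepsilon$ whenever $t,s\in[a,b]$ and $0\le s-t\le\delta$, where $\operatorname{osc}_{[t,s]}A=\sup_{t\le\tau\le\sigma\le s}|A(\sigma)-A(\tau)|$. $\Omega[0,1]$ is the set of bounded $A\colon[0,1]\to\mathbb R$ such that for every $\varepsilon>0$ there is $a\in(0,1)$ with $A|_{[0,a]}\in\Omega_\varepsilon[0,a]$ and $A|_{[a,1]}$ of bounded variation on $[a,1]$. $\widehat{\Omega}[0,1]=\Omega[0,1]\cup C[0,1]\cup BV[0,1]$. *)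

From Stdlib Require Import Reals Lra.
Open Scope R_scope.

Fixpoint sumR (n : nat) (f : nat -> R) : R :=
  match n with
  | O => 0
  | S m => sumR m f + f m
  end.

Definition is_partition (a b : R) (n : nat) (p : nat -> R) : Prop :=
  p 0%nat = a /\ p n = b /\ (forall i, (i < n)%nat -> p i < p (S i)).

Definition is_tagged (n : nat) (p xi : nat -> R) : Prop :=
  forall i, (i < n)%nat -> p i <= xi i <= p (S i).

Definition mesh_lt (n : nat) (p : nat -> R) (delta : R) : Prop :=
  forall i, (i < n)%nat -> p (S i) - p i < delta.

Definition RS_sum (A x : R -> R) (n : nat) (p xi : nat -> R) : R :=
  sumR n (fun i => A (xi i) * (x (p (S i)) - x (p i))).

Definition RS_integral_is (A x : R -> R) (a b I : R) : Prop :=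
  forall eps, 0 < eps -> exists delta, 0 < delta /\
    forall n p xi, is_partition a b n p -> is_tagged n p xi ->
      mesh_lt n p delta -> Rabs (RS_sum A x n p xi - I) < eps.

Definition RS_integrable (A x : R -> R) (a b : R) : Prop :=
  exists I, RS_integral_is A x a b I.

Definition var_sum (f : R -> R) (n : nat) (p : nat -> R) : R :=
  sumR n (fun i => Rabs (f (p (S i)) - f (p i))).

Definition BV_on (f : R -> R) (a b : R) : Prop :=
  exists M, forall n p, is_partition a b n p -> var_sum f n p <= M.

Definition bounded_on (f : R -> R) (a b : R) : Prop :=
  exists M, forall t, a <= t <= b -> Rabs (f t) <= M.

Definition continuous_on (f : R -> R) (a b : R) : Prop :=
  forall t, a <= t <= b -> forall eps, 0 < eps -> exists delta, 0 < delta /\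
    forall s, a <= s <= b -> Rabs (s - t) < delta -> Rabs (f s - f t) < eps.

Definition osc_le (A : R -> R) (t s eps : R) : Prop :=
  forall tau sigma, t <= tau -> tau <= sigma -> sigma <= s ->
    Rabs (A sigma - A tau) <= eps.

Definition Omega_eps (eps : R) (A : R -> R) (a b : R) : Prop :=
  bounded_on A a b /\
  exists delta, 0 < delta /\
    forall t s, a <= t <= b -> a <= s <= b -> 0 <= s - t <= delta ->
      osc_le A t s eps.

Definition Omega01 (A : R -> R) : Prop :=
  bounded_on A 0 1 /\
  forall eps, 0 < eps -> exists a, 0 < a < 1 /\
    Omega_eps eps A 0 a /\ BV_on A a 1.

Definition CBV01 (x : R -> R) : Prop := continuous_on x 0 1 /\ BV_on x 0 1.

Definition Omega_hat01 (A : R -> R) : Prop :=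
  Omega01 A \/ continuous_on A 0 1 \/ BV_on A 0 1.

From Stdlib Require Import Reals Lra Lia.
Open Scope R_scope.

(* Two Riemann-Stieltjes sums of f against g with mesh < delta are compared on
   their common refinement: their difference is a sum of terms
   (f(xi) - f(eta)) * (increment of g) over pairs of overlapping cells, hence it
   is at most the oscillation of f at scale 2 delta times the variation of g.
   This gives the Cauchy criterion when f is continuous and g has bounded
   variation; summation by parts reduces the case f in BV, g continuous to it;
   and an A in Omega[0,1] splits as A(min(t,a)), of oscillation at most eps,
   plus A(max(a,t)) - A(a), of bounded variation. *)

Lemma sumR_ext n f g : (forall i, (i < n)%nat -> f i = g i) -> sumR n f = sumR n g.
Proof.
  induction n as [|n IH]; intros H; simpl; [reflexivity|].
  rewrite IH by (intros; apply H; lia). rewrite H by lia. reflexivity.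
Qed.

Lemma sumR_plus n f g : sumR n (fun i => f i + g i) = sumR n f + sumR n g.
Proof. induction n; simpl; [lra | rewrite IHn; lra]. Qed.

Lemma sumR_minus n f g : sumR n (fun i => f i - g i) = sumR n f - sumR n g.
Proof. induction n; simpl; [lra | rewrite IHn; lra]. Qed.

Lemma sumR_scal n c f : sumR n (fun i => c * f i) = c * sumR n f.
Proof. induction n; simpl; [lra | rewrite IHn; lra]. Qed.

Lemma sumR_abs n f : Rabs (sumR n f) <= sumR n (fun i => Rabs (f i)).
Proof.
  induction n; simpl; [rewrite Rabs_R0; lra|].
  eapply Rle_trans; [apply Rabs_triang | lra].
Qed.

Lemma sumR_le n f g : (forall i, (i < n)%nat -> f i <= g i) -> sumR n f <= sumR n g.
Proof.
  induction n as [|n IH]; intros H; simpl; [lra|].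
  assert (f n <= g n) by (apply H; lia).
  assert (sumR n f <= sumR n g) by (apply IH; intros; apply H; lia).
  lra.
Qed.

Lemma sumR_telescope n h : sumR n (fun i => h (S i) - h i) = h n - h O.
Proof. induction n; simpl; [lra | rewrite IHn; lra]. Qed.

Lemma sumR_swap n m F :
  sumR n (fun i => sumR m (fun j => F i j)) = sumR m (fun j => sumR n (fun i => F i j)).
Proof.
  induction n; simpl.
  - induction m; simpl; lra.
  - rewrite IHn, <- sumR_plus. reflexivity.
Qed.

Lemma sumR_add n k f : sumR (n + k) f = sumR n f + sumR k (fun j => f (n + j)%nat).
Proof.
  induction k; simpl; [rewrite Nat.add_0_r; lra|].
  rewrite Nat.add_succ_r. simpl. rewrite IHk. lra.
Qed.

Lemma Nat_divmod_add i j m : (j < m)%nat -> ((i * m + j) / m = i /\ (i * m + j) mod m = j)%nat.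
Proof.
  intros H. split.
  - symmetry. apply (Nat.div_unique _ _ _ j); lia.
  - symmetry. apply (Nat.mod_unique _ _ i j); lia.
Qed.

Lemma Nat_divmod_succ k m : (0 < m)%nat ->
  ((S (k mod m) < m /\ S k / m = k / m /\ S k mod m = S (k mod m)) \/
   (S (k mod m) = m /\ S k / m = S (k / m) /\ S k mod m = 0))%nat.
Proof.
  intros Hm. pose proof (Nat.div_mod k m ltac:(lia)) as E.
  pose proof (Nat.mod_upper_bound k m ltac:(lia)).
  destruct (Nat.eq_dec (S (k mod m)) m) as [Heq|Hne].
  - right. split; [exact Heq|].
    replace (S k) with (S (k / m) * m + 0)%nat by nia. apply Nat_divmod_add. lia.
  - left. split; [lia|].
    replace (S k) with (k / m * m + S (k mod m))%nat by nia. apply Nat_divmod_add. lia.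
Qed.

Lemma sumR_flatten n m F : (0 < m)%nat ->
  sumR n (fun i => sumR m (fun j => F i j)) = sumR (n * m) (fun k => F (k / m)%nat (k mod m)%nat).
Proof.
  intros Hm. induction n; simpl; [lra|].
  rewrite IHn. replace (m + n * m)%nat with (n * m + m)%nat by lia.
  rewrite sumR_add. f_equal. apply sumR_ext. intros j Hj.
  destruct (Nat_divmod_add n j m Hj) as [-> ->]. reflexivity.
Qed.

Definition is_weak_partition (a b : R) (n : nat) (p : nat -> R) : Prop :=
  p 0%nat = a /\ p n = b /\ (forall i, (i < n)%nat -> p i <= p (S i)).

Lemma partition_weak a b n p : is_partition a b n p -> is_weak_partition a b n p.
Proof. intros [H0 [Hn Hi]]. repeat split; auto. intros i Hlt. left. auto. Qed.

Lemma weak_partition_le a b n p : is_weak_partition a b n p ->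
  forall i j, (i <= j)%nat -> (j <= n)%nat -> p i <= p j.
Proof.
  intros [_ [_ Hi]] i j Hij. induction Hij as [|j Hij IH]; intros Hj; [lra|].
  assert (p j <= p (S j)) by (apply Hi; lia).
  assert (p i <= p j) by (apply IH; lia).
  lra.
Qed.

Lemma weak_partition_range a b n p : is_weak_partition a b n p ->
  forall i, (i <= n)%nat -> a <= p i <= b.
Proof.
  intros Hp i Hi. pose proof Hp as [H0 [Hn _]]. rewrite <- H0, <- Hn.
  split; apply (weak_partition_le a b n p Hp); lia.
Qed.

Lemma weak_partition_length_pos a b n p : a < b -> is_weak_partition a b n p -> (0 < n)%nat.
Proof. intros Hab [P0 [Pn _]]. destruct n; [|lia]. rewrite P0 in Pn. lra. Qed.

(* Repeated points contribute nothing to the variation, so they can be deleted. *)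
Lemma var_sum_strict_of_weak g n r : (forall i, (i < n)%nat -> r i <= r (S i)) ->
  exists m q, q O = r O /\ q m = r n /\ (forall i, (i < m)%nat -> q i < q (S i)) /\
    var_sum g n r = var_sum g m q.
Proof.
  unfold var_sum. induction n as [|n IH]; intros Hr.
  - exists O, r. repeat split; auto. intros; lia.
  - destruct IH as [m [q [Q0 [Qm [Qi Qv]]]]]; [intros; apply Hr; lia|].
    destruct (Hr n ltac:(lia)) as [Hlt | Heq].
    + exists (S m), (fun k => if (k <=? m)%nat then q k else r (S n)).
      repeat split.
      * exact Q0.
      * destruct (Nat.leb_spec (S m) m); [lia | reflexivity].
      * intros i Hi. destruct (Nat.leb_spec i m); [|lia].
        destruct (Nat.leb_spec (S i) m); [apply Qi; lia|].
        replace i with m by lia. lra.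
      * cbn [sumR]. rewrite Qv, Nat.leb_refl.
        destruct (Nat.leb_spec (S m) m); [lia|]. rewrite Qm. f_equal.
        apply sumR_ext. intros i Hi.
        destruct (Nat.leb_spec i m), (Nat.leb_spec (S i) m); [reflexivity | lia ..].
    + exists m, q. repeat split; auto; [rewrite Qm; auto|].
      simpl. rewrite Qv, Heq, Rminus_diag, Rabs_R0. lra.
Qed.

Lemma BV_on_weak_bound g a b : BV_on g a b -> exists M, 0 < M /\
  forall n r, is_weak_partition a b n r -> var_sum g n r <= M.
Proof.
  intros [M HM]. exists (Rabs M + 1). split; [pose proof (Rabs_pos M); lra|].
  intros n r [R0 [Rn Ri]].
  destruct (var_sum_strict_of_weak g n r Ri) as [m [q [Q0 [Qm [Qi ->]]]]].
  pose proof (Rle_abs M).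
  enough (var_sum g m q <= M) by lra.
  apply HM. repeat split; congruence || auto.
Qed.

Definition clamp (lo hi t : R) : R := Rmax lo (Rmin t hi).

Ltac clamp_cases := unfold clamp, Rmax, Rmin; repeat destruct Rle_dec.

Lemma clamp_lo lo hi t : t <= lo -> clamp lo hi t = lo.
Proof. intros; clamp_cases; lra. Qed.

Lemma clamp_hi lo hi t : lo <= hi -> hi <= t -> clamp lo hi t = hi.
Proof. intros; clamp_cases; lra. Qed.

Lemma clamp_id lo hi t : lo <= t <= hi -> clamp lo hi t = t.
Proof. intros; clamp_cases; lra. Qed.

Lemma clamp_le lo hi s t : lo <= hi -> s <= t -> clamp lo hi s <= clamp lo hi t.
Proof. intros; clamp_cases; lra. Qed.

Lemma clamp_range lo hi t : lo <= hi -> lo <= clamp lo hi t <= hi.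
Proof. intros; clamp_cases; lra. Qed.

Lemma clamp_dist lo hi s t : lo <= hi -> lo <= t <= hi -> Rabs (clamp lo hi s - t) <= Rabs (s - t).
Proof. intros; clamp_cases; unfold Rabs; repeat destruct Rcase_abs; lra. Qed.

(* Clamping [c,d] into [a,b] and [a,b] into [c,d] give the same interval
   (their intersection), unless both collapse to a point. *)
Lemma clamp_swap a b c d : a <= b -> c <= d ->
  (clamp a b d = clamp c d b /\ clamp a b c = clamp c d a) \/
  (clamp a b d = clamp a b c /\ clamp c d b = clamp c d a).
Proof. intros; clamp_cases; first [left; split; lra | right; split; lra]. Qed.

Lemma clamp_neq a b c d : a <= b -> c <= d -> clamp a b d <> clamp a b c -> c < b /\ a < d.
Proof. intros H1 H2 H3. unfold clamp, Rmax, Rmin in H3; repeat destruct Rle_dec; split; lra. Qed.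

Definition osc_within (f : R -> R) (a b d e : R) : Prop :=
  forall s t, a <= s <= b -> a <= t <= b -> Rabs (s - t) < d -> Rabs (f s - f t) <= e.

Section CommonRefinement.

Variables (a b : R) (n m : nat) (p q : nat -> R).
Hypothesis Hab : a < b.
Hypothesis Hp : is_weak_partition a b n p.
Hypothesis Hq : is_weak_partition a b m q.

(* The point q j moved into the i-th cell of p; for fixed i these points run
   through the cell, and listed lexicographically in (i, j) they form a common
   refinement of p and q. *)
Definition refine_point (i j : nat) : R := clamp (p i) (p (S i)) (q j).

Definition refine_incr (g : R -> R) (i j : nat) : R :=
  g (refine_point i (S j)) - g (refine_point i j).

Definition refine_flat (k : nat) : R := refine_point (k / m) (k mod m).

Lemma refine_row_telescope g i : (i < n)%nat ->
  sumR m (fun j => refine_incr g i j) = g (p (S i)) - g (p i).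
Proof.
  intros Hi. pose proof (weak_partition_range a b n p Hp) as Rp.
  pose proof Hp as [_ [_ Pi]]. pose proof Hq as [Q0 [Qm _]].
  unfold refine_incr. rewrite (sumR_telescope m (fun j => g (refine_point i j))).
  unfold refine_point. rewrite Qm, Q0, clamp_hi, clamp_lo; try reflexivity.
  - apply (Rp i); lia.
  - apply Pi; lia.
  - apply (Rp (S i)); lia.
Qed.

Lemma refine_col_telescope g j : (j < m)%nat ->
  sumR n (fun i => refine_incr g i j) = g (q (S j)) - g (q j).
Proof.
  intros Hj. pose proof (weak_partition_range a b m q Hq) as Rq.
  pose proof Hp as [P0 [Pn Pi]]. pose proof Hq as [_ [_ Qi]].
  rewrite (sumR_ext n _ (fun i => g (clamp (q j) (q (S j)) (p (S i)))
                                  - g (clamp (q j) (q (S j)) (p i)))).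
  - rewrite (sumR_telescope n (fun i => g (clamp (q j) (q (S j)) (p i)))).
    rewrite Pn, P0, clamp_hi, clamp_lo; try reflexivity.
    + apply (Rq j); lia.
    + apply Qi; lia.
    + apply (Rq (S j)); lia.
  - intros i Hi. unfold refine_incr, refine_point.
    destruct (clamp_swap (p i) (p (S i)) (q j) (q (S j)) ltac:(apply Pi; lia)
                ltac:(apply Qi; lia)) as [[E1 E2] | [E1 E2]]; rewrite E1, E2; lra.
Qed.

Lemma refine_flat_succ k : (k < n * m)%nat ->
  refine_flat (S k) = refine_point (k / m) (S (k mod m)).
Proof.
  intros Hk. pose proof (weak_partition_length_pos a b m q Hab Hq) as Hm.
  pose proof (weak_partition_range a b n p Hp) as Rp.
  pose proof Hp as [_ [_ Pi]]. pose proof Hq as [Q0 [Qm _]].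
  assert (Hkm : (k / m < n)%nat) by (apply Nat.Div0.div_lt_upper_bound; lia).
  unfold refine_flat.
  destruct (Nat_divmod_succ k m Hm) as [[_ [-> ->]] | [E [-> ->]]]; [reflexivity|].
  rewrite E. unfold refine_point. rewrite Qm, Q0, clamp_lo, clamp_hi; try reflexivity.
  - apply Pi; lia.
  - apply (Rp (S (k / m))); lia.
  - apply (Rp (S (k / m))); lia.
Qed.

Lemma refine_flat_weak_partition : is_weak_partition a b (n * m) refine_flat.
Proof.
  pose proof (weak_partition_length_pos a b m q Hab Hq) as Hm.
  pose proof (weak_partition_range a b n p Hp) as Rp.
  pose proof Hp as [P0 [Pn Pi]]. pose proof Hq as [Q0 [_ Qi]].
  unfold refine_flat. repeat split.
  - rewrite Nat.Div0.div_0_l, Nat.Div0.mod_0_l. unfold refine_point.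
    rewrite Q0, clamp_lo; [exact P0 | apply (Rp O); lia].
  - destruct (Nat_divmod_add n 0 m Hm) as [E1 E2]. rewrite Nat.add_0_r in E1, E2.
    rewrite E1, E2. unfold refine_point. rewrite Q0, clamp_lo; [exact Pn | lra].
  - intros k Hk. fold (refine_flat (S k)). rewrite refine_flat_succ by exact Hk.
    apply clamp_le.
    + apply Pi, Nat.Div0.div_lt_upper_bound; lia.
    + apply Qi, Nat.mod_upper_bound; lia.
Qed.

Lemma refine_var_le g M : (forall N r, is_weak_partition a b N r -> var_sum g N r <= M) ->
  sumR n (fun i => sumR m (fun j => Rabs (refine_incr g i j))) <= M.
Proof.
  intros Hg. rewrite (sumR_flatten n m _ (weak_partition_length_pos a b m q Hab Hq)).
  replace (sumR (n * m) _) with (var_sum g (n * m) refine_flat).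
  - apply Hg, refine_flat_weak_partition.
  - unfold var_sum. apply sumR_ext. intros k Hk.
    rewrite refine_flat_succ by exact Hk. reflexivity.
Qed.

Lemma refine_incr_cells_meet g i j : (i < n)%nat -> (j < m)%nat ->
  refine_incr g i j <> 0 -> q j < p (S i) /\ p i < q (S j).
Proof.
  intros Hi Hj Hne. pose proof Hp as [_ [_ Pi]]. pose proof Hq as [_ [_ Qi]].
  apply clamp_neq; [apply Pi; lia | apply Qi; lia |].
  intros E. apply Hne. unfold refine_incr, refine_point. rewrite E. ring.
Qed.

Lemma RS_sum_weak_diff_le f g e M d xi eta :
  0 <= e -> osc_within f a b (2 * d) e ->
  (forall N r, is_weak_partition a b N r -> var_sum g N r <= M) ->
  is_tagged n p xi -> mesh_lt n p d -> is_tagged m q eta -> mesh_lt m q d ->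
  Rabs (RS_sum f g n p xi - RS_sum f g m q eta) <= e * M.
Proof.
  intros He Hf Hg Tp Mp Tq Mq.
  pose proof (weak_partition_range a b n p Hp) as Rp.
  pose proof (weak_partition_range a b m q Hq) as Rq.
  assert (Sp : RS_sum f g n p xi = sumR n (fun i => sumR m (fun j => f (xi i) * refine_incr g i j))).
  { unfold RS_sum. apply sumR_ext. intros i Hi.
    rewrite sumR_scal, refine_row_telescope by exact Hi. reflexivity. }
  assert (Sq : RS_sum f g m q eta = sumR n (fun i => sumR m (fun j => f (eta j) * refine_incr g i j))).
  { rewrite sumR_swap. unfold RS_sum. apply sumR_ext. intros j Hj.
    rewrite sumR_scal, refine_col_telescope by exact Hj. reflexivity. }
  assert (Hterm : forall i j, (i < n)%nat -> (j < m)%nat ->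
            Rabs (f (xi i) * refine_incr g i j - f (eta j) * refine_incr g i j)
            <= e * Rabs (refine_incr g i j)).
  { intros i j Hi Hj. rewrite <- Rmult_minus_distr_r, Rabs_mult.
    destruct (Req_dec (refine_incr g i j) 0) as [Z | Z].
    - rewrite Z, Rabs_R0. lra.
    - (* a nonzero increment means the two cells overlap, so the tags are 2 d close *)
      apply Rmult_le_compat_r; [apply Rabs_pos|].
      destruct (refine_incr_cells_meet g i j Hi Hj Z).
      specialize (Tp i Hi). specialize (Tq j Hj). specialize (Mp i Hi). specialize (Mq j Hj).
      pose proof (Rp i ltac:(lia)). pose proof (Rp (S i) ltac:(lia)).
      pose proof (Rq j ltac:(lia)). pose proof (Rq (S j) ltac:(lia)).
      apply Hf; try lra. unfold Rabs; destruct Rcase_abs; lra. }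
  rewrite Sp, Sq, <- sumR_minus.
  eapply Rle_trans; [apply sumR_abs|].
  eapply Rle_trans; [apply (sumR_le n _ (fun i => e * sumR m (fun j => Rabs (refine_incr g i j))))|].
  - intros i Hi. rewrite <- sumR_minus, <- sumR_scal.
    eapply Rle_trans; [apply sumR_abs | apply sumR_le; intros j Hj; apply Hterm; assumption].
  - rewrite sumR_scal. apply Rmult_le_compat_l; [exact He | apply refine_var_le, Hg].
Qed.

End CommonRefinement.

Definition RS_cauchy_at (f g : R -> R) (a b eps : R) : Prop :=
  exists delta, 0 < delta /\
  forall n p xi m q eta,
    is_partition a b n p -> is_tagged n p xi -> mesh_lt n p delta ->
    is_partition a b m q -> is_tagged m q eta -> mesh_lt m q delta ->
    Rabs (RS_sum f g n p xi - RS_sum f g m q eta) <= eps.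

Definition RS_cauchy (f g : R -> R) (a b : R) : Prop :=
  forall eps, 0 < eps -> RS_cauchy_at f g a b eps.

Definition unif_partition (a b : R) (k i : nat) : R := a + (b - a) * INR i / INR (S k).

Lemma unif_partition_tagged a b k : a < b ->
  is_partition a b (S k) (unif_partition a b k) /\
  is_tagged (S k) (unif_partition a b k) (unif_partition a b k).
Proof.
  intros Hab. assert (Hk : 0 < INR (S k)) by (apply lt_0_INR; lia).
  assert (Hle : forall i, unif_partition a b k i <= unif_partition a b k (S i)).
  { intros i. unfold unif_partition. rewrite (S_INR i). unfold Rdiv.
    apply Rplus_le_compat_l, Rmult_le_compat_r; [left; apply Rinv_0_lt_compat; exact Hk | nra]. }
  split; [split; [|split] | intros i _; split; [lra | apply Hle]]; unfold unif_partition.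
  - simpl. unfold Rdiv. ring.
  - field. lra.
  - intros i _. rewrite (S_INR i). unfold Rdiv.
    apply Rplus_lt_compat_l, Rmult_lt_compat_r; [apply Rinv_0_lt_compat; exact Hk | nra].
Qed.

Lemma unif_partition_mesh a b d : a < b -> 0 < d ->
  exists N, forall k, (N <= k)%nat -> mesh_lt (S k) (unif_partition a b k) d.
Proof.
  intros Hab Hd. destruct (archimed_cor1 (d / (b - a))) as [N [HN HN0]].
  { apply Rdiv_lt_0_compat; lra. }
  exists N. intros k Hk i _. unfold unif_partition. rewrite S_INR.
  assert (HNk : INR N <= INR (S k)) by (apply le_INR; lia).
  assert (H0 : 0 < INR N) by (apply lt_0_INR; exact HN0).
  replace (a + (b - a) * (INR i + 1) / INR (S k) - (a + (b - a) * INR i / INR (S k)))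
    with ((b - a) / INR (S k)) by (field; lra).
  apply (Rmult_lt_reg_r (/ (b - a))); [apply Rinv_0_lt_compat; lra|].
  replace ((b - a) / INR (S k) * / (b - a)) with (/ INR (S k)) by (field; lra).
  exact (Rle_lt_trans _ _ _ (Rinv_le_contravar _ _ H0 HNk) HN).
Qed.

Lemma RS_cauchy_integrable f g a b : a < b -> RS_cauchy f g a b -> RS_integrable f g a b.
Proof.
  intros Hab Hc.
  set (u := fun k => RS_sum f g (S k) (unif_partition a b k) (unif_partition a b k)).
  assert (Hu : Cauchy_crit u).
  { intros eps Heps. destruct (Hc (eps / 2) ltac:(lra)) as [d [Hd H]].
    destruct (unif_partition_mesh a b d Hab Hd) as [N HN]. exists N.
    intros k l Hk Hl. unfold Rdist, u.
    destruct (unif_partition_tagged a b k Hab), (unif_partition_tagged a b l Hab).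
    eapply Rle_lt_trans; [apply H; auto | lra]. }
  destruct (R_complete u Hu) as [I HI]. exists I. intros eps Heps.
  destruct (Hc (eps / 2) ltac:(lra)) as [d [Hd H]].
  destruct (unif_partition_mesh a b d Hab Hd) as [N2 HN2].
  destruct (HI (eps / 2) ltac:(lra)) as [N1 HN1].
  exists d. split; [exact Hd|]. intros n p xi Hp Ht Hm.
  set (k := max N1 N2). specialize (HN1 k ltac:(lia)). unfold Rdist in HN1.
  destruct (unif_partition_tagged a b k Hab).
  assert (Rabs (RS_sum f g n p xi - u k) <= eps / 2) by (apply H; auto; apply HN2; lia).
  replace (RS_sum f g n p xi - I) with ((RS_sum f g n p xi - u k) + (u k - I)) by ring.
  eapply Rle_lt_trans; [apply Rabs_triang | lra].
Qed.

Lemma continuous_on_osc_within f a b : a <= b -> continuous_on f a b ->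
  forall e, 0 < e -> exists d, 0 < d /\ osc_within f a b d e.
Proof.
  intros Hab Hc e He.
  set (h := fun t => f (clamp a b t)).
  assert (Hh : forall t, a <= t <= b -> continuity_pt h t).
  { intros t Ht eps Heps. destruct (Hc t Ht eps Heps) as [d [Hd H]].
    exists d. split; [exact Hd|]. intros y [_ Hy]. simpl in Hy |- *. unfold Rdist in *.
    unfold h. rewrite (clamp_id a b t Ht). apply H.
    - apply clamp_range; exact Hab.
    - eapply Rle_lt_trans; [apply clamp_dist; assumption | exact Hy]. }
  destruct (Heine h (fun t => a <= t <= b) (compact_P3 a b) Hh (mkposreal e He)) as [d Hd].
  exists d. split; [apply cond_pos|]. intros s t Hs Ht Hst.
  specialize (Hd s t Hs Ht Hst). unfold h in Hd. rewrite !clamp_id in Hd by assumption.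
  simpl in Hd. lra.
Qed.

Lemma RS_cauchy_at_osc_within f g a b e M d : a < b -> 0 < d -> 0 <= e ->
  osc_within f a b (2 * d) e ->
  (forall n r, is_weak_partition a b n r -> var_sum g n r <= M) ->
  RS_cauchy_at f g a b (e * M).
Proof.
  intros Hab Hd He Hf Hg. exists d. split; [exact Hd|].
  intros n p xi m q eta Hp Tp Mp Hq Tq Mq.
  apply (RS_sum_weak_diff_le a b n m p q Hab (partition_weak _ _ _ _ Hp)
           (partition_weak _ _ _ _ Hq) f g e M d); assumption.
Qed.

Lemma RS_cauchy_continuous_BV f g a b : a < b ->
  continuous_on f a b -> BV_on g a b -> RS_cauchy f g a b.
Proof.
  intros Hab Hf Hg eps Heps.
  destruct (BV_on_weak_bound g a b Hg) as [M [HM Hvar]].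
  destruct (continuous_on_osc_within f a b ltac:(lra) Hf (eps / M))
    as [d [Hd Hosc]]; [apply Rdiv_lt_0_compat; assumption|].
  replace eps with (eps / M * M) by (field; lra).
  apply (RS_cauchy_at_osc_within f g a b _ M (d / 2)); try lra.
  - left. apply Rdiv_lt_0_compat; assumption.
  - replace (2 * (d / 2)) with d by lra. exact Hosc.
  - exact Hvar.
Qed.

Lemma sumR_by_parts n (u v : nat -> R) :
  sumR n (fun i => u (S i) * (v (S i) - v i)) + sumR (S n) (fun k => v k * (u (S k) - u k))
  = u (S n) * v n - u O * v O.
Proof.
  induction n as [|n IH]; [simpl; ring|].
  change (sumR (S n) (fun i => u (S i) * (v (S i) - v i)))
    with (sumR n (fun i => u (S i) * (v (S i) - v i)) + u (S n) * (v (S n) - v n)).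
  change (sumR (S (S n)) (fun k => v k * (u (S k) - u k)))
    with (sumR (S n) (fun k => v k * (u (S k) - u k)) + v (S n) * (u (S (S n)) - u (S n))).
  lra.
Qed.

(* Summation by parts exchanges points and tags: the tags, framed by the
   endpoints, become a weak partition tagged by the old points. *)
Definition tag_partition (a b : R) (n : nat) (xi : nat -> R) (k : nat) : R :=
  match k with O => a | S k' => if (k' <? n)%nat then xi k' else b end.

Lemma RS_sum_by_parts f g a b n p xi : p O = a -> p n = b ->
  RS_sum f g n p xi = f b * g b - f a * g a - RS_sum g f (S n) (tag_partition a b n xi) p.
Proof.
  intros P0 Pn.
  pose proof (sumR_by_parts n (fun k => f (tag_partition a b n xi k)) (fun k => g (p k))) as E.
  cbv beta in E. unfold RS_sum.
  rewrite (sumR_ext n _ (fun i => f (tag_partition a b n xi (S i)) * (g (p (S i)) - g (p i)))).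
  - replace (tag_partition a b n xi (S n)) with b in E
      by (cbn [tag_partition]; destruct (Nat.ltb_spec n n); [exfalso; lia | reflexivity]).
    change (tag_partition a b n xi O) with a in E. rewrite Pn, P0 in E. lra.
  - intros i Hi. cbn [tag_partition]. destruct (Nat.ltb_spec i n); [reflexivity | exfalso; lia].
Qed.

Lemma tag_partition_bracket a b n p xi d : a < b ->
  is_partition a b n p -> is_tagged n p xi -> mesh_lt n p d ->
  forall k, (k <= n)%nat ->
    tag_partition a b n xi k <= p k <= tag_partition a b n xi (S k) /\
    tag_partition a b n xi (S k) - tag_partition a b n xi k < 2 * d.
Proof.
  intros Hab Hp T Mh k Hk.
  pose proof (weak_partition_length_pos a b n p Hab (partition_weak a b n p Hp)) as Hn.
  destruct Hp as [P0 [Pn _]].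
  destruct k as [|k]; cbn [tag_partition].
  - destruct (Nat.ltb_spec 0 n); [|exfalso; lia].
    pose proof (T O Hn). pose proof (Mh O Hn). lra.
  - destruct (Nat.ltb_spec k n); [|exfalso; lia].
    pose proof (T k ltac:(lia)). pose proof (Mh k ltac:(lia)).
    destruct (Nat.ltb_spec (S k) n).
    + pose proof (T (S k) ltac:(lia)). pose proof (Mh (S k) ltac:(lia)). lra.
    + replace (S k) with n in * by lia. lra.
Qed.

Lemma tag_partition_tagged a b n p xi d : a < b ->
  is_partition a b n p -> is_tagged n p xi -> mesh_lt n p d ->
  is_weak_partition a b (S n) (tag_partition a b n xi) /\
  is_tagged (S n) (tag_partition a b n xi) p /\
  mesh_lt (S n) (tag_partition a b n xi) (2 * d).
Proof.
  intros Hab Hp T Mh.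
  pose proof (tag_partition_bracket a b n p xi d Hab Hp T Mh) as B.
  split; [split; [reflexivity | split] | split].
  - cbn [tag_partition]. destruct (Nat.ltb_spec n n); [exfalso; lia | reflexivity].
  - intros k Hk. destruct (B k ltac:(lia)). lra.
  - intros k Hk. apply B. lia.
  - intros k Hk. apply B. lia.
Qed.

Lemma RS_cauchy_BV_continuous f g a b : a < b ->
  BV_on f a b -> continuous_on g a b -> RS_cauchy f g a b.
Proof.
  intros Hab Hf Hg eps Heps.
  destruct (BV_on_weak_bound f a b Hf) as [M [HM Hvar]].
  destruct (continuous_on_osc_within g a b ltac:(lra) Hg (eps / M))
    as [d [Hd Hosc]]; [apply Rdiv_lt_0_compat; assumption|].
  exists (d / 4). split; [lra|]. intros n p xi m q eta Hp Tp Mp Hq Tq Mq.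
  destruct (tag_partition_tagged a b n p xi _ Hab Hp Tp Mp) as [W1 [T1 M1]].
  destruct (tag_partition_tagged a b m q eta _ Hab Hq Tq Mq) as [W2 [T2 M2]].
  destruct Hp as [P0 [Pn _]]. destruct Hq as [Q0 [Qm _]].
  rewrite (RS_sum_by_parts f g a b n p xi), (RS_sum_by_parts f g a b m q eta) by assumption.
  set (Sn := RS_sum g f (S n) (tag_partition a b n xi) p).
  set (Sm := RS_sum g f (S m) (tag_partition a b m eta) q).
  replace (f b * g b - f a * g a - Sn - (f b * g b - f a * g a - Sm)) with (Sm - Sn) by ring.
  replace eps with (eps / M * M) by (field; lra).
  apply (RS_sum_weak_diff_le a b (S m) (S n) _ _ Hab W2 W1 g f _ M (2 * (d / 4)));
    try assumption.
  - left. apply Rdiv_lt_0_compat; assumption.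
  - replace (2 * (2 * (d / 4))) with d by lra. exact Hosc.
Qed.

Lemma RS_cauchy_at_add f f1 f2 g a b e1 e2 : (forall t, f t = f1 t + f2 t) ->
  RS_cauchy_at f1 g a b e1 -> RS_cauchy_at f2 g a b e2 -> RS_cauchy_at f g a b (e1 + e2).
Proof.
  intros Hf [d1 [Hd1 H1]] [d2 [Hd2 H2]].
  assert (Hsplit : forall n p xi, RS_sum f g n p xi = RS_sum f1 g n p xi + RS_sum f2 g n p xi).
  { intros. unfold RS_sum. rewrite <- sumR_plus. apply sumR_ext. intros. rewrite Hf. ring. }
  assert (Hmesh : forall n p, mesh_lt n p (Rmin d1 d2) -> mesh_lt n p d1 /\ mesh_lt n p d2).
  { intros n p Hm. pose proof (Rmin_l d1 d2). pose proof (Rmin_r d1 d2).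
    split; intros i Hi; specialize (Hm i Hi); lra. }
  exists (Rmin d1 d2). split; [apply Rmin_glb_lt; assumption|].
  intros n p xi m q eta Hp Tp Mp Hq Tq Mq.
  destruct (Hmesh n p Mp), (Hmesh m q Mq).
  rewrite !Hsplit.
  specialize (H1 n p xi m q eta Hp Tp ltac:(assumption) Hq Tq ltac:(assumption)).
  specialize (H2 n p xi m q eta Hp Tp ltac:(assumption) Hq Tq ltac:(assumption)).
  eapply Rle_trans; [|apply (Rplus_le_compat _ _ _ _ H1 H2)].
  eapply Rle_trans; [|apply Rabs_triang]. right. f_equal. ring.
Qed.

Lemma Omega_eps_osc_within_min e A lo c b : lo <= c -> Omega_eps e A lo c ->
  exists d, 0 < d /\ osc_within (fun t => A (Rmin t c)) lo b d e.
Proof.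
  intros Hc [_ [d [Hd Hosc]]]. exists d. split; [exact Hd|].
  assert (Hle : forall s t, lo <= s <= b -> lo <= t <= b -> Rabs (s - t) < d ->
            Rmin s c <= Rmin t c -> Rabs (A (Rmin t c) - A (Rmin s c)) <= e).
  { intros s t Hs Ht Hst Hmin.
    assert (Rmin s c <= c /\ Rmin t c <= c) by (split; apply Rmin_r).
    assert (lo <= Rmin s c /\ lo <= Rmin t c) by (split; apply Rmin_glb; lra).
    apply (Hosc (Rmin s c) (Rmin t c)); try lra.
    split; [lra|]. unfold Rmin in *. unfold Rabs in Hst.
    repeat destruct Rle_dec; destruct Rcase_abs; lra. }
  intros s t Hs Ht Hst.
  destruct (Rle_dec (Rmin s c) (Rmin t c)).
  - rewrite Rabs_minus_sym. apply Hle; assumption.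
  - apply Hle; try assumption; [rewrite Rabs_minus_sym; exact Hst | lra].
Qed.

Lemma BV_on_max_shift f a b c k : a <= c <= b -> BV_on f c b ->
  BV_on (fun t => f (Rmax c t) - k) a b.
Proof.
  intros Hc Hf. destruct (BV_on_weak_bound f c b Hf) as [M [_ HM]].
  exists M. intros n p Hp.
  pose proof (partition_weak a b n p Hp) as [P0 [Pn Pi]].
  replace (var_sum _ n p) with (var_sum f n (fun i => Rmax c (p i))).
  - apply HM. repeat split.
    + rewrite P0. apply Rmax_left. lra.
    + rewrite Pn. apply Rmax_right. lra.
    + intros i Hi. specialize (Pi i Hi). unfold Rmax. repeat destruct Rle_dec; lra.
  - unfold var_sum. apply sumR_ext. intros i _. f_equal. ring.
Qed.

Lemma RS_cauchy_Omega01 A x : Omega01 A -> CBV01 x -> RS_cauchy A x 0 1.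
Proof.
  intros [_ HA] [Hxc Hxv] eps Heps.
  destruct (BV_on_weak_bound x 0 1 Hxv) as [M [HM Hvar]].
  assert (He : 0 < eps / 2 / M) by (apply Rdiv_lt_0_compat; lra).
  destruct (HA _ He) as [c [Hc [Hosc HBV]]].
  destruct (Omega_eps_osc_within_min _ A 0 c 1 ltac:(lra) Hosc) as [d [Hd Hd']].
  replace eps with (eps / 2 / M * M + eps / 2) by (field; lra).
  apply (RS_cauchy_at_add A (fun t => A (Rmin t c)) (fun t => A (Rmax c t) - A c)).
  - intros t. unfold Rmin, Rmax.
    destruct (Rle_dec t c), (Rle_dec c t); try (replace t with c by lra); ring.
  - apply (RS_cauchy_at_osc_within _ _ 0 1 _ M (d / 2)); try lra.
    + replace (2 * (d / 2)) with d by lra. exact Hd'.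
    + exact Hvar.
  - apply RS_cauchy_BV_continuous; [lra | | exact Hxc | lra].
    apply BV_on_max_shift; [lra | exact HBV].
Qed.

Theorem lemma4p12 (x A : R -> R) :
  CBV01 x -> Omega_hat01 A -> RS_integrable A x 0 1.
Proof.
  intros Hx HA. pose proof Hx as [Hxc Hxv].
  apply RS_cauchy_integrable; [lra|].
  destruct HA as [HO | [HC | HB]].
  - apply RS_cauchy_Omega01; assumption.
  - apply RS_cauchy_continuous_BV; [lra | assumption ..].
  - apply RS_cauchy_BV_continuous; [lra | assumption ..].
Qed.
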